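(* Let $H \le G$ be finite groups such that the interval $[H,G]$ is bottom Boolean. Then $[H,G]$ is linearly primitive, i.e. there is an irreducible complex representation $V$ of $G$ with $G_{(V^H)} = H$.
   Context: The interval $[H,G]$ is the lattice of subgroups $L$ with $H \le L \le G$ (meet = intersection, join = generated subgroup); its atoms are its minimal elements strictly above $H$; its bottom interval is $[H,B]$ with $B$ the join of all atoms. A finite lattice is Boolean if it is isomorphic to the lattice of all subsets of a finite set; $[H,G]$ is bottom Boolean if its bottom interval is Boolean. For a representation $V$ of $G$ and a subspace $X$: $V^H = \{v : hv = v \ \forall h \in H\}$ and $G_{(X)} = \{g \in G : gx = x \ \forall x \in X\}$. *)

From HB Require Import structures.
From mathcomp Require Import all_boot all_order all_algebra all_fingroup all_solvable all_field all_character.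
Set Implicit Arguments. Unset Strict Implicit. Unset Printing Implicit Defensive.

Section SubgroupInterval.
Variable gT : finGroupType.
Implicit Types H G L K : {group gT}.

Definition sg_interval H G : {set {group gT}} :=
  [set L : {group gT} | (H \subset L) && (L \subset G)].

Definition sg_atom H G L : bool :=
  [&& L \in sg_interval H G, H \proper L &
      [forall K : {group gT},
         ((K \in sg_interval H G) && (H \proper K) && (K \subset L)) ==> (K == L)]].

Definition sg_bottom_top H G : {set gT} :=
  (<<H :|: \bigcup_(L : {group gT} | sg_atom H G L) L>>)%g.

(* The interval [H,B] (B a set) is Boolean: order-isomorphic (hence
   lattice-isomorphic) to the lattice of all subsets of a finite set 'I_n. *)
Definition sg_interval_boolean H (B : {set gT}) : Prop :=
  exists n : nat, exists f : {group gT} -> {set 'I_n},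
    let I := [set L : {group gT} | (H \subset L) && (L \subset B)] in
    {in I &, forall L K, (L \subset K) = (f L \subset f K)} /\
    (forall S : {set 'I_n}, exists2 L, L \in I & f L = S).

Definition bottom_boolean H G : Prop :=
  sg_interval_boolean H (sg_bottom_top H G).

Definition linearly_primitive H G : Prop :=
  exists n : nat, exists rG : mx_representation algC G n,
    mx_irreducible rG /\ rstab rG (rfix_mx rG H) = H.

End SubgroupInterval.

From mathcomp Require Import all_boot all_order all_algebra all_fingroup all_solvable all_field all_character.
Set Implicit Arguments. Unset Strict Implicit. Unset Printing Implicit Defensive.
Import GRing.Theory Num.Theory.

(* Work in the group algebra: put e_X = |X|^-1 sum_(x in X) x and
   q = e_H (e_H - e_K1) ... (e_H - e_Km), the K_j being the atoms of [H,G].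
   Bottom Booleanness means that no atom lies in the join of H and the other
   atoms.  Right multiplication by e_H - e_K kills a nonzero right H-invariant
   element a supported on a subgroup M only if a = a e_K is right K-invariant,
   which forces K <= M; so by induction q <> 0, and q acts nontrivially on some
   irreducible V.
   Were G_(V^H) larger than H it would contain an atom K; as K fixes the image
   of e_H, both e_H e_K = e_H and e_H e_K = e_K hold on V, so e_H - e_K and
   hence q would act as 0 on V. *)

Section SubgroupIntervalAtoms.
Variable gT : finGroupType.
Implicit Types H G K L X : {group gT}.

Lemma sg_atom_sub H G K : sg_atom H G K -> (H \subset K) && (K \subset G).
Proof. by case/and3P; rewrite inE. Qed.

Lemma sg_atom_exists H G X : H \proper X -> X \subset G ->
  exists2 K, sg_atom H G K & K \subset X.
Proof.
move=> pHX sXG; pose P K := (H \proper K) && (K \subset X).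
have PX : P X by rewrite /P pHX subxx.
have [K /mingroupP[/andP[pHK sKX] minK] _] := mingroup_exists PX.
exists K => //; rewrite /sg_atom inE (proper_sub pHK) (subset_trans sKX sXG) pHK /=.
apply/forallP => L; apply/implyP => /andP[/andP[_ pHL] sLK].
by apply/eqP/val_inj/minK; rewrite // /P pHL (subset_trans sLK sKX).
Qed.

Lemma sg_atom_sub_bottom_top H G K : sg_atom H G K -> K \subset sg_bottom_top H G.
Proof. by move=> atomK; rewrite sub_gen // subsetU // (bigcup_sup K atomK) orbT. Qed.

Lemma join_sg_atoms_sub H G (s : seq {group gT}) :
  H \subset G -> all (sg_atom H G) s -> <<H :|: \bigcup_(L <- s) L>>%g \subset G.
Proof.
move=> sHG /allP atoms_s; rewrite gen_subG subUset sHG bigcup_seq.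
by apply/bigcupsP => L /atoms_s/sg_atom_sub/andP[].
Qed.

Section BottomBoolean.
Variables (H G : {group gT}) (n : nat) (f : {group gT} -> {set 'I_n}).
Let I := [set L : {group gT} | (H \subset L) && (L \subset sg_bottom_top H G)].
Hypothesis f_mono : {in I &, forall L K, (L \subset K) = (f L \subset f K)}.
Hypothesis f_onto : forall S, exists2 L, L \in I & f L = S.

Let bottom_in : H \in I.
Proof. by rewrite inE subxx sub_gen ?subsetUl. Qed.

Let atom_in L : sg_atom H G L -> L \in I.
Proof.
move=> atomL; rewrite inE sg_atom_sub_bottom_top // andbT.
by case/andP: (sg_atom_sub atomL).
Qed.

Let f_bottom : f H = set0.
Proof.
have [L LI fL] := f_onto set0.
by apply/eqP; rewrite -subset0 -fL -f_mono ?bottom_in ?LI //; case/setIdP: LI.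
Qed.

Let f_atom L : sg_atom H G L -> exists x, f L = [set x].
Proof.
move=> atomL; have LI := atom_in atomL.
have /and3P[_ pHL /forallP minL] := atomL; have /andP[_ sLG] := sg_atom_sub atomL.
have [x fLx] : exists x, x \in f L.
  apply/set0Pn; apply: contraNneq (proper_subn pHL) => fL0.
  by rewrite f_mono ?LI ?bottom_in // f_bottom fL0.
exists x; have [K KI fK] := f_onto [set x].
have sKL : K \subset L by rewrite f_mono ?KI ?LI // fK sub1set.
have pHK : H \proper K.
  rewrite properE (f_mono KI bottom_in) fK f_bottom sub1set inE andbT.
  by case/setIdP: KI.
suff /eqP <- : K == L by [].
apply: (implyP (minL K)).
by rewrite /sg_interval inE (proper_sub pHK) (subset_trans sKL sLG) pHK sKL.
Qed.

Lemma atom_notin_join K (s : seq {group gT}) :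
  sg_atom H G K -> all (sg_atom H G) s -> K \notin s ->
  ~~ (K \subset <<H :|: \bigcup_(L <- s) L>>%g).
Proof.
move=> atomK /allP atoms_s; apply: contra => sKJ; have KI := atom_in atomK.
have [J JI fJ] := f_onto (\bigcup_(L <- s) f L).
have sJ : <<H :|: \bigcup_(L <- s) L>>%g \subset J.
  rewrite gen_subG subUset; case/setIdP: (JI) => -> _ /=.
  rewrite bigcup_seq; apply/bigcupsP => L Ls.
  by rewrite f_mono ?(atom_in (atoms_s L Ls)) ?JI // fJ bigcup_seq (bigcup_sup L Ls).
have [x fKx] := f_atom atomK.
have := subset_trans sKJ sJ; rewrite f_mono ?KI ?JI // fJ fKx sub1set bigcup_seq.
case/bigcupP=> L Ls; have atomL := atoms_s L Ls; have [y fLy] := f_atom atomL.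
rewrite fLy inE => /eqP exy; suff -> : K = L by [].
apply/val_inj/eqP; rewrite eqEsubset !f_mono ?KI ?(atom_in atomL) //.
by rewrite fKx fLy exy subxx.
Qed.

End BottomBoolean.

Lemma bottom_boolean_atom_notin_join H G K (s : seq {group gT}) :
  bottom_boolean H G -> sg_atom H G K -> all (sg_atom H G) s -> K \notin s ->
  ~~ (K \subset <<H :|: \bigcup_(L <- s) L>>%g).
Proof. by case=> n [f /= [f_mono f_onto]]; apply: (atom_notin_join f_mono f_onto). Qed.

End SubgroupIntervalAtoms.

Local Open Scope ring_scope.

Section GroupAlgebra.
Variables (gT : finGroupType) (G : {group gT}).
Implicit Types (a b c : gT -> algC) (H K M X : {group gT}).

(* Elements of the group algebra algC[G] are modelled as functions gT -> algC
   of which only the values on G matter: gconv is their product, gavg X is e_X,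
   and gfun_mx rG a is the matrix by which a acts on row vectors. *)
Definition gconv a b : gT -> algC := fun g => \sum_(x in G) a x * b (x^-1 * g)%g.

Definition gfun_mx n (rG : mx_representation algC G n) a : 'M[algC]_n :=
  \sum_(g in G) a g *: rG g.

Definition gavg (X : {set gT}) : gT -> algC := fun g => #|X|%:R^-1 *+ (g \in X).

Definition gavg_diff (H K : {set gT}) : gT -> algC := fun g => gavg H g - gavg K g.

Definition right_invariant (X : {set gT}) a := forall g h, h \in X -> a (g * h)%g = a g.

Definition supported a (M : {set gT}) := forall g, a g != 0 -> g \in M.

Lemma sum_mulgl (V : nmodType) X (F : gT -> V) x : x \in X ->
  \sum_(g in X) F g = \sum_(y in X) F (x * y)%g.
Proof.
by move=> Xx; rewrite (reindex_inj (mulgI x)); apply: eq_bigl => y; rewrite /= groupMl.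
Qed.

Lemma sum_mulgr (V : nmodType) X (F : gT -> V) x : x \in X ->
  \sum_(g in X) F g = \sum_(y in X) F (y * x)%g.
Proof.
by move=> Xx; rewrite (reindex_inj (mulIg x)); apply: eq_bigl => y; rewrite /= groupMr.
Qed.

Lemma gconvBr a b c g :
  gconv a (fun x => b x - c x) g = gconv a b g - gconv a c g.
Proof. by rewrite /gconv -sumrB; apply: eq_bigr => x _; rewrite mulrBr. Qed.

Lemma gconv_right_invariant X a b :
  right_invariant X b -> right_invariant X (gconv a b).
Proof. by move=> bX g h Xh; apply: eq_bigr => x _; rewrite mulgA bX. Qed.

Lemma gavg_right_invariant X K : X \subset K -> right_invariant X (gavg K).
Proof. by move=> sXK g h Xh; rewrite /gavg groupMr // (subsetP sXK). Qed.

Lemma gavg_diff_right_invariant H K : H \subset K -> right_invariant H (gavg_diff H K).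
Proof.
by move=> sHK g h Hh; rewrite /gavg_diff !(gavg_right_invariant _ _ Hh).
Qed.

Lemma gconv_gavg H a : H \subset G -> right_invariant H a ->
  {in G, gconv a (gavg H) =1 a}.
Proof.
move=> sHG aH g Gg; rewrite /gconv (sum_mulgl _ Gg).
under eq_bigr => y _ do rewrite invMg mulgKV /gavg groupV mulrnAr mulrb.
rewrite -big_mkcondr (eq_bigl (mem H)) => [|y]; last first.
  by rewrite andb_idl // => /(subsetP sHG).
under eq_bigr => y Hy do rewrite aH //.
by rewrite sumr_const -[_ *+ #|H|]mulr_natr -mulrA mulVf ?mulr1 ?neq0CG.
Qed.

Lemma supported_gconv a b (A B : {set gT}) M : supported a A -> supported b B ->
  A \subset M -> B \subset M -> supported (gconv a b) M.
Proof.
move=> aA bB sAM sBM g; apply: contraR => notMg; rewrite /gconv big1 // => x _.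
have [-> | /aA/(subsetP sAM) Mx] := eqVneq (a x) 0; first by rewrite mul0r.
have [-> | /bB/(subsetP sBM) Mx'g] := eqVneq (b (x^-1 * g)%g) 0; first by rewrite mulr0.
by case/negP: notMg; rewrite -(mulKVg x g) groupM.
Qed.

Lemma supported_gavg_diff H K : H \subset K -> supported (gavg_diff H K) K.
Proof.
move=> sHK g; apply: contraR => notKg.
by rewrite /gavg_diff /gavg (negbTE notKg) (contraNF (subsetP sHK g) notKg) subrr.
Qed.

Lemma gconv_gavg_diff_neq0 H K M a g :
  H \subset K -> K \subset G -> M \subset G -> supported a M -> right_invariant H a ->
  a g != 0 -> ~~ (K \subset M) -> exists y : gT, gconv a (gavg_diff H K) y != 0.
Proof.
move=> sHK sKG sMG aM aH ag_neq0 notKM; apply/existsP.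
apply: contraR notKM => /existsPn conv0.
have aK : {in G, a =1 gconv a (gavg K)}.
  move=> x Gx; move/negPn/eqP: (conv0 x); rewrite /gavg_diff gconvBr.
  by rewrite (gconv_gavg (subset_trans sHK sKG)) // => /subr0_eq.
have Mg := aM g ag_neq0; have Gg := subsetP sMG g Mg.
apply/subsetP => k Kk; rewrite -(groupMl k Mg); apply: aM.
rewrite aK ?groupM ?(subsetP sKG k Kk) //.
by rewrite (gconv_right_invariant _ (gavg_right_invariant (subxx K))) // -aK.
Qed.

Lemma gfun_mx_gconv n (rG : mx_representation algC G n) a b :
  gfun_mx rG (gconv a b) = gfun_mx rG a *m gfun_mx rG b.
Proof.
rewrite /gfun_mx /gconv mulmx_suml; under eq_bigr do rewrite scaler_suml.
rewrite exchange_big; apply: eq_bigr => x Gx.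
rewrite (sum_mulgl _ Gx) -scalemxAl mulmx_sumr scaler_sumr.
by apply: eq_bigr => y Gy; rewrite mulKg -scalemxAr scalerA repr_mxM.
Qed.

Lemma gfun_mx_gavg n (rG : mx_representation algC G n) X : X \subset G ->
  gfun_mx rG (gavg X) = #|X|%:R^-1 *: \sum_(x in X) rG x.
Proof.
move=> sXG; rewrite /gfun_mx (bigID (mem X)) /= [E in _ + E]big1 ?addr0; last first.
  by move=> g /andP[_ /negbTE notXg]; rewrite /gavg notXg mulr0n scale0r.
rewrite scaler_sumr; apply: eq_big => [g | g /andP[_ Xg]].
  by rewrite andb_idl // => /(subsetP sXG).
by rewrite /gavg Xg mulr1n.
Qed.

Lemma mxtrace_gfun_mx n (rG : mx_representation algC G n) a y : y \in G ->
  \tr (gfun_mx rG a *m rG y) = \sum_(g in G) a g * cfRepr rG (g * y)%g.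
Proof.
move=> Gy; rewrite /gfun_mx mulmx_suml raddf_sum; apply: eq_bigr => g Gg.
by rewrite -scalemxAl /= mxtraceZ -repr_mxM // cfunE groupM.
Qed.

(* Tested against the regular character: sum_i chi_i(1) chi_i vanishes off 1. *)
Lemma gfun_mx_irr_neq0 a y : y \in G -> a y != 0 ->
  exists i : Iirr G, gfun_mx 'Chi_i a != 0.
Proof.
move=> Gy ay_neq0; apply/existsP; apply: contraR ay_neq0 => /existsPn gfun_mx0.
have : \sum_(g in G) a g * cfReg G (g * y^-1)%g = 0.
  under eq_bigr do rewrite cfReg_sum sum_cfunE mulr_sumr.
  rewrite exchange_big big1 // => i _; under eq_bigr do rewrite cfunE mulrCA.
  rewrite -mulr_sumr -irrRepr -mxtrace_gfun_mx ?groupV //.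
  by move/negPn/eqP: (gfun_mx0 i) => ->; rewrite mul0mx mxtrace0 mulr0.
rewrite (bigD1 y) //= cfRegE mulgV eqxx big1 ?addr0 => [|g /andP[_ ne_gy]].
  by move/eqP; rewrite mulr1n mulf_eq0 (negbTE (neq0CG G)) orbF.
by rewrite cfRegE -eq_mulgV1 (negbTE ne_gy) mulr0.
Qed.

Lemma gfun_mx_gavg_diff_eq0 n (rG : mx_representation algC G n) H K :
  H \subset K -> K \subset G -> K \subset rstab rG (rfix_mx rG H) ->
  gfun_mx rG (gavg_diff H K) = 0.
Proof.
move=> sHK sKG; have sHG := subset_trans sHK sKG; rewrite rfix_mx_rstabC // => fixHK.
have -> : gfun_mx rG (gavg_diff H K) = gfun_mx rG (gavg H) - gfun_mx rG (gavg K).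
  by rewrite /gfun_mx -sumrB; apply: eq_bigr => g _; rewrite scalerBl.
rewrite !gfun_mx_gavg //.
set EH := \sum_(x in H) rG x; set EK := \sum_(x in K) rG x.
have EHK_EK : EH *m EK = EK *+ #|H|.
  rewrite /EH mulmx_suml -sumr_const; apply: eq_bigr => h Hh.
  rewrite /EK mulmx_sumr [RHS](sum_mulgl _ (subsetP sHK h Hh)).
  by apply: eq_bigr => k Kk; rewrite repr_mxM ?(subsetP sHG h Hh) ?(subsetP sKG k Kk).
have EH_fixH : (EH <= rfix_mx rG H)%MS.
  apply/rfix_mxP => h Hh; rewrite /EH mulmx_suml [RHS](sum_mulgr _ Hh).
  by apply: eq_bigr => x Hx; rewrite repr_mxM ?(subsetP sHG).
have EHK_EH : EH *m EK = EH *+ #|K|.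
  rewrite /EK mulmx_sumr -sumr_const; apply: eq_bigr => k Kk.
  exact: rfix_mxP (submx_trans EH_fixH fixHK) k Kk.
apply/eqP; rewrite subr_eq0; apply/eqP.
apply: (@scalerI _ _ (#|H|%:R * #|K|%:R)); first by rewrite mulf_neq0 ?neq0CG.
rewrite !scalerA mulrAC mulfV ?neq0CG // mul1r -mulrA mulfV ?neq0CG // mulr1.
by rewrite !scaler_nat -EHK_EK -EHK_EH.
Qed.

End GroupAlgebra.

Section AtomProduct.
Variables (gT : finGroupType) (H G : {group gT}).
Hypothesis sHG : H \subset G.

Definition atom_product (s : seq {group gT}) : gT -> algC :=
  foldl (fun a (K : {group gT}) => gconv G a (gavg_diff H K)) (gavg H) s.

Lemma atom_product_rcons s K :
  atom_product (rcons s K) = gconv G (atom_product s) (gavg_diff H K).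
Proof. by rewrite /atom_product foldl_rcons. Qed.

Lemma atom_product_props s : bottom_boolean H G -> uniq s -> all (sg_atom H G) s ->
  [/\ supported (atom_product s) <<H :|: \bigcup_(L <- s) L>>%g,
      right_invariant H (atom_product s) & exists g, atom_product s g != 0].
Proof.
move=> boolHG; elim/last_ind: s => [_ _ | s K IHs].
  split; [|exact: gavg_right_invariant | exists 1%g].
    move=> g; rewrite big_nil setU0 genGid; apply: contraR => notHg.
    by rewrite /atom_product /gavg /= (negbTE notHg) mulr0n.
  by rewrite /atom_product /gavg /= group1 mulr1n invr_eq0 neq0CG.
rewrite rcons_uniq all_rcons => /andP[notKs uniq_s] /andP[atomK atoms_s].
have [supp_s invH_s [g nz_g]] := IHs uniq_s atoms_s.
have /andP[sHK sKG] := sg_atom_sub atomK.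
rewrite atom_product_rcons; split.
- apply: supported_gconv supp_s (supported_gavg_diff sHK) _ _.
    by rewrite genS // -cats1 big_cat setUA subsetUl.
  by rewrite sub_gen // -cats1 big_cat big_seq1 setUA subsetUr.
- exact: gconv_right_invariant (gavg_diff_right_invariant sHK).
- apply: gconv_gavg_diff_neq0 sHK sKG _ supp_s invH_s nz_g _.
    exact: join_sg_atoms_sub.
  exact: bottom_boolean_atom_notin_join boolHG atomK atoms_s notKs.
Qed.

Lemma gfun_mx_atom_product_eq0 n (rG : mx_representation algC G n) (K : {group gT})
    (s : seq {group gT}) :
  K \in s -> gfun_mx rG (gavg_diff H K) = 0 -> gfun_mx rG (atom_product s) = 0.
Proof.
move=> Ks rGK0; elim/last_ind: s Ks => [//|s L IHs].
rewrite mem_rcons inE atom_product_rcons gfun_mx_gconv.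
by case/orP=> [/eqP <- | /IHs ->]; rewrite ?rGK0 ?mulmx0 ?mul0mx.
Qed.

End AtomProduct.

Theorem theorem3p13 (gT : finGroupType) (H G : {group gT}) :
  H \subset G -> bottom_boolean H G -> linearly_primitive H G.
Proof.
move=> sHG boolHG; pose s := enum [set L : {group gT} | sg_atom H G L].
have atoms_s : all (sg_atom H G) s by apply/allP => L; rewrite mem_enum inE.
have [supp_q _ [y nz_qy]] := atom_product_props sHG boolHG (enum_uniq _) atoms_s.
have Gy := subsetP (join_sg_atoms_sub sHG atoms_s) y (supp_q y nz_qy).
have [i nz_qi] := gfun_mx_irr_neq0 Gy nz_qy.
exists _, 'Chi_i; split; first exact: socle_irr.
have sH_stab : H \subset rstab 'Chi_i (rfix_mx 'Chi_i H) by rewrite rfix_mx_rstabC.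
apply/eqP; rewrite eqEsubset sH_stab andbT; apply: contraR nz_qi => not_stabH.
have pH_stab : H \proper rstab 'Chi_i (rfix_mx 'Chi_i H) by rewrite properE sH_stab.
have [K atomK sK_stab] := sg_atom_exists pH_stab (rstab_sub _ _).
have /andP[sHK sKG] := sg_atom_sub atomK.
apply/eqP/(gfun_mx_atom_product_eq0 (K := K)); first by rewrite mem_enum inE.
exact: gfun_mx_gavg_diff_eq0.
Qed.
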